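(* Let $k,d\ge1$, let $x_1,\dots,x_d\in\mathbb T^k$ be free, let $M\ge1$ be an integer, let $A,B\subseteq\mathbb T^k$ be Baire measurable and let $\mathcal G=(A,B,E)$ with $E:=\{(a,b)\in A\times B: b-a\in V_M\}$, where $V_M:=\{\sum_{j=1}^dn_jx_j:n\in\mathbb Z^d,\|n\|_\infty\le M\}$. Let $i\ge1$, $r_i\in\mathbb N$, and let $A_i\subseteq A$, $B_i\subseteq B$ be Baire measurable sets such that at least one of $A_i,B_i$ is empty and $A_i\cup B_i$ is $(r_i+4M)$-sparse. Then for every Baire measurable $\mathcal G$-extendable matching $\mathcal M_{i-1}$ there is a Baire measurable matching $\mathcal M_i\supseteq\mathcal M_{i-1}$ in $\mathcal G$ such that: $\mathcal M_i^{-1}(B)\supseteq A_i$ and $\mathcal M_i(A)\supseteq B_i$; for every $u\in\mathbb T^k$, any two distinct pairs $(a,b),(x,y)\in(\mathcal M_i\setminus\mathcal M_{i-1})_u$ satisfy $\operatorname{dist}(\{a,b\},\{x,y\})>r_i+2M$; and for every $(a,b)\in\mathcal M_i\setminus\mathcal M_{i-1}$, the set $\mathcal M_{i-1}\cup\{(a,b)\}$ is a $\mathcal G$-extendable matching.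
   Context: $\mathbb T^k=\mathbb R^k/\mathbb Z^k\cong[0,1)^k$; vectors are free if no non-trivial integer combination is $0$ in $\mathbb T^k$. For $X\subseteq\mathbb T^k$, $X_u:=\{n\in\mathbb Z^d:u+\sum n_jx_j\in X\}$; $X$ is $r$-sparse if for each $u$ distinct elements of $X_u$ are at $L^\infty$-distance $>r$. A matching in $\mathcal G$ is a set of edges forming a partial injection $A\to B$; it is perfect if it is a bijection $A\to B$; a matching is $\mathcal G$-extendable if it is contained in some (not necessarily measurable) perfect matching of $\mathcal G$. A matching $\mathcal M$ is Baire measurable if for each $v\in V_M$ the set $\{a\in A:\mathcal M(a)-a=v\}$ is Baire measurable. For a set $\mathcal N$ of edges and $u\in\mathbb T^k$, $\mathcal N_u:=\{(n,m)\in\mathbb Z^d\times\mathbb Z^d:(u+\sum n_jx_j,\,u+\sum m_jx_j)\in\mathcal N\}$. Distance between finite sets $X,Y\subseteq\mathbb Z^d$ is $\min\{\|x-y\|_\infty:x\in X,y\in Y\}$. *)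

From Stdlib Require Import Reals Lra Lia ZArith.
Open Scope R_scope.

(** * The torus T^k = R^k / Z^k, with canonical representatives in [0,1)^k.
    A point is a function nat -> R whose coordinates i < k lie in [0,1)
    and whose coordinates i >= k are 0 (so equality of points is
    equality in the torus). *)

Definition torus_pred (k : nat) (x : nat -> R) : Prop :=
  (forall i, (i < k)%nat -> 0 <= x i < 1) /\ (forall i, (k <= i)%nat -> x i = 0).

Definition torus (k : nat) : Type := { x : nat -> R | torus_pred k x }.

Definition tcoord {k : nat} (x : torus k) (i : nat) : R := proj1_sig x i.

Definition frac (r : R) : R := r - IZR (up r) + 1.

Lemma frac_range (r : R) : 0 <= frac r < 1.
Proof. unfold frac. destruct (archimed r) as [H1 H2]. lra. Qed.

Lemma tproj_ok (k : nat) (y : nat -> R) :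
  torus_pred k (fun i => if Nat.ltb i k then frac (y i) else 0).
Proof.
  split; intros i Hi.
  - rewrite (proj2 (Nat.ltb_lt i k) Hi). apply frac_range.
  - destruct (Nat.ltb_spec i k); [lia | reflexivity].
Qed.

Definition tproj (k : nat) (y : nat -> R) : torus k :=
  exist _ (fun i => if Nat.ltb i k then frac (y i) else 0) (tproj_ok k y).

Definition tzero (k : nat) : torus k := tproj k (fun _ => 0).

Definition tadd {k : nat} (a b : torus k) : torus k :=
  tproj k (fun i => tcoord a i + tcoord b i).

Fixpoint rsum (n : nat) (f : nat -> R) : R :=
  match n with
  | O => 0
  | S n => rsum n f + f n
  end.

(** u + sum_{j<d} n_j x_j,  for n in Z^d (only coordinates j < d of n matter) *)
Definition tpt {k : nat} (d : nat) (x : nat -> torus k) (u : torus k) (n : nat -> Z)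
  : torus k :=
  tproj k (fun i => tcoord u i + rsum d (fun j => IZR (n j) * tcoord (x j) i)).

Definition free {k : nat} (d : nat) (x : nat -> torus k) : Prop :=
  forall n : nat -> Z, tpt d x (tzero k) n = tzero k -> forall j, (j < d)%nat -> n j = 0%Z.

Definition zeq_d (d : nat) (n m : nat -> Z) : Prop := forall j, (j < d)%nat -> n j = m j.

Definition zfar (d : nat) (r : Z) (n m : nat -> Z) : Prop :=
  exists j, (j < d)%nat /\ (Z.abs (n j - m j) > r)%Z.

Definition sparse {k : nat} (d : nat) (x : nat -> torus k) (r : Z)
  (X : torus k -> Prop) : Prop :=
  forall (u : torus k) (n m : nat -> Z),
    X (tpt d x u n) -> X (tpt d x u m) -> ~ zeq_d d n m -> zfar d r n m.

Definition cdist (a b : R) : R := Rmin (Rabs (a - b)) (1 - Rabs (a - b)).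

(** the torus metric: max_{i<k} of coordinatewise circle distance, expressed
    as "ball of radius eps" *)
Definition tball {k : nat} (x : torus k) (eps : R) (y : torus k) : Prop :=
  forall i, (i < k)%nat -> cdist (tcoord x i) (tcoord y i) < eps.

Definition topen {k : nat} (U : torus k -> Prop) : Prop :=
  forall x, U x -> exists eps, 0 < eps /\ forall y, tball x eps y -> U y.

Definition tclosure {k : nat} (S : torus k -> Prop) (x : torus k) : Prop :=
  forall eps, 0 < eps -> exists y, S y /\ tball x eps y.

Definition nowhere_dense {k : nat} (S : torus k -> Prop) : Prop :=
  forall U : torus k -> Prop, topen U -> (forall x, U x -> tclosure S x) ->
    forall x, ~ U x.

Definition meager {k : nat} (S : torus k -> Prop) : Prop :=
  exists Ns : nat -> torus k -> Prop,
    (forall n, nowhere_dense (Ns n)) /\ (forall x, S x -> exists n, Ns n x).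

Definition baire_meas {k : nat} (S : torus k -> Prop) : Prop :=
  exists U : torus k -> Prop, topen U /\
    meager (fun x => (S x /\ ~ U x) \/ (U x /\ ~ S x)).

Definition inVM {k : nat} (d : nat) (x : nat -> torus k) (M : nat) (v : torus k) : Prop :=
  exists n : nat -> Z,
    (forall j, (j < d)%nat -> (Z.abs (n j) <= Z.of_nat M)%Z) /\ v = tpt d x (tzero k) n.

Definition gedge {k : nat} (d : nat) (x : nat -> torus k) (M : nat)
  (A B : torus k -> Prop) (a b : torus k) : Prop :=
  A a /\ B b /\ exists v, inVM d x M v /\ b = tadd a v.

Definition edgeset (k : nat) : Type := torus k -> torus k -> Prop.

Definition matching {k : nat} (d : nat) (x : nat -> torus k) (M : nat)
  (A B : torus k -> Prop) (N : edgeset k) : Prop :=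
  (forall a b, N a b -> gedge d x M A B a b) /\
  (forall a b b', N a b -> N a b' -> b = b') /\
  (forall a a' b, N a b -> N a' b -> a = a').

Definition perfect_matching {k : nat} (d : nat) (x : nat -> torus k) (M : nat)
  (A B : torus k -> Prop) (N : edgeset k) : Prop :=
  matching d x M A B N /\
  (forall a, A a -> exists b, N a b) /\ (forall b, B b -> exists a, N a b).

Definition extendable {k : nat} (d : nat) (x : nat -> torus k) (M : nat)
  (A B : torus k -> Prop) (N : edgeset k) : Prop :=
  matching d x M A B N /\
  exists P : edgeset k, perfect_matching d x M A B P /\ (forall a b, N a b -> P a b).

Definition baire_matching {k : nat} (d : nat) (x : nat -> torus k) (M : nat)
  (A : torus k -> Prop) (N : edgeset k) : Prop :=
  forall v, inVM d x M v -> baire_meas (fun a => A a /\ N a (tadd a v)).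

From Stdlib Require Import Reals ZArith.
From Stdlib Require Import Lra Lia List Cantor Classical IndefiniteDescription
  FunctionalExtensionality ProofIrrelevance.
Open Scope R_scope.

(* For a vertex [a] of [Ai] not yet matched, take the first [w] with
   [||w||_inf <= M] such that, for every [N], some matching of the graph
   contains the edge [(a, a + w)], agrees with [Mprev] and covers every vertex
   of the orbit of [a] within distance [N] of [a].  Such a [w] exists because
   [Mprev] is extendable, and a Koenig-type compactness argument along the
   countable orbit of [a] shows that [Mprev] plus [(a, a + w)] is then
   extendable.  For fixed [N] the condition only depends on finitely many
   translates of [A], [B] and [Mprev], which gives Baire measurability; the
   sparseness of [Ai] keeps the new edges pairwise far apart.  When [Ai] is
   empty the same construction is run in the transposed graph. *)

Definition is_int (r : R) : Prop := exists z : Z, r = IZR z.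

Lemma is_int_add a b : is_int a -> is_int b -> is_int (a + b).
Proof. intros [z1 ->] [z2 ->]. exists (z1 + z2)%Z. symmetry; apply plus_IZR. Qed.

Lemma is_int_sub a b : is_int a -> is_int b -> is_int (a - b).
Proof. intros [z1 ->] [z2 ->]. exists (z1 - z2)%Z. symmetry; apply minus_IZR. Qed.

Lemma is_int_opp a : is_int a -> is_int (- a).
Proof. intros [z ->]. exists (- z)%Z. symmetry; apply opp_IZR. Qed.

Lemma is_int_eq a b : a = b -> is_int a -> is_int b.
Proof. intros ->; auto. Qed.

Ltac int_combination e :=
  apply is_int_eq with e;
  [ring | repeat (assumption || apply is_int_add || apply is_int_sub || apply is_int_opp)].

Lemma frac_sub_is_int r : is_int (r - frac r).
Proof. unfold frac. exists (up r - 1)%Z. rewrite minus_IZR. simpl. lra. Qed.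

Lemma frac_eq r s : is_int (r - s) -> frac r = frac s.
Proof.
  intros [z Hz]. unfold frac.
  assert (Hup : up r = (up s + z)%Z).
  { symmetry. apply tech_up; rewrite plus_IZR; destruct (archimed s); lra. }
  rewrite Hup, plus_IZR. lra.
Qed.

Lemma frac_id r : 0 <= r < 1 -> frac r = r.
Proof.
  intros H. unfold frac. replace (up r) with 1%Z by (apply tech_up; simpl; lra).
  simpl. lra.
Qed.

Lemma tcoord_tproj_int k y i : (i < k)%nat -> is_int (tcoord (tproj k y) i - y i).
Proof.
  intros Hi. unfold tcoord, tproj; simpl. rewrite (proj2 (Nat.ltb_lt i k) Hi).
  apply is_int_eq with (- (y i - frac (y i))); [ring | apply is_int_opp, frac_sub_is_int].
Qed.

Lemma tproj_eq k y y' :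
  (forall i, (i < k)%nat -> is_int (y i - y' i)) -> tproj k y = tproj k y'.
Proof.
  intros H. unfold tproj. apply eq_sig_hprop; [intros; apply proof_irrelevance |]. simpl.
  apply functional_extensionality. intros i.
  destruct (Nat.ltb_spec i k); auto. apply frac_eq; auto.
Qed.

Lemma tproj_tcoord {k} (u : torus k) : tproj k (tcoord u) = u.
Proof.
  apply eq_sig_hprop; [intros; apply proof_irrelevance |].
  destruct u as [f [Hlt Hge]]. unfold tcoord; simpl.
  apply functional_extensionality. intros i.
  destruct (Nat.ltb_spec i k); [apply frac_id | symmetry]; auto.
Qed.

Lemma tcoord_range {k} (u : torus k) i : (i < k)%nat -> 0 <= tcoord u i < 1.
Proof. destruct u as [f [Hlt Hge]]. apply Hlt. Qed.

Lemma torus_eq_int {k} (u v : torus k) :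
  (forall i, (i < k)%nat -> is_int (tcoord u i - tcoord v i)) -> u = v.
Proof. intros H. rewrite <- (tproj_tcoord u), <- (tproj_tcoord v). apply tproj_eq; auto. Qed.

Lemma tcoord_tadd_int {k} (u v : torus k) i : (i < k)%nat ->
  is_int (tcoord (tadd u v) i - (tcoord u i + tcoord v i)).
Proof. apply tcoord_tproj_int. Qed.

Lemma tcoord_tzero k i : tcoord (tzero k) i = 0.
Proof.
  unfold tzero, tcoord, tproj; simpl. destruct (i <? k)%nat; auto.
  rewrite frac_id; lra.
Qed.

Lemma rsum_ext n f g : (forall j, (j < n)%nat -> f j = g j) -> rsum n f = rsum n g.
Proof. induction n; simpl; intros H; auto. rewrite IHn, H by auto. reflexivity. Qed.

Lemma rsum_add n f g : rsum n (fun j => f j + g j) = rsum n f + rsum n g.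
Proof. induction n; simpl; [ring |]. rewrite IHn. ring. Qed.

Lemma rsum_opp n f : rsum n (fun j => - f j) = - rsum n f.
Proof. induction n; simpl; [ring |]. rewrite IHn. ring. Qed.

Definition zadd (n m : nat -> Z) : nat -> Z := fun j => (n j + m j)%Z.
Definition zopp (n : nat -> Z) : nat -> Z := fun j => (- n j)%Z.
Definition zzero : nat -> Z := fun _ => 0%Z.

Definition lin_comb {k} d (x : nat -> torus k) (n : nat -> Z) (i : nat) : R :=
  rsum d (fun j => IZR (n j) * tcoord (x j) i).

Lemma lin_comb_add {k} d (x : nat -> torus k) n m i :
  lin_comb d x (zadd n m) i = lin_comb d x n i + lin_comb d x m i.
Proof.
  unfold lin_comb, zadd. rewrite <- rsum_add. apply rsum_ext. intros. rewrite plus_IZR. ring.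
Qed.

Lemma lin_comb_opp {k} d (x : nat -> torus k) n i :
  lin_comb d x (zopp n) i = - lin_comb d x n i.
Proof.
  unfold lin_comb, zopp. rewrite <- rsum_opp. apply rsum_ext. intros. rewrite opp_IZR. ring.
Qed.

Lemma lin_comb_zero {k} d (x : nat -> torus k) i : lin_comb d x zzero i = 0.
Proof. unfold lin_comb, zzero. induction d; simpl; auto. rewrite IHd. ring. Qed.

Section Orbits.

Variables (k d : nat) (x : nat -> torus k).

Lemma tcoord_tpt_int u n i : (i < k)%nat ->
  is_int (tcoord (tpt d x u n) i - (tcoord u i + lin_comb d x n i)).
Proof. apply tcoord_tproj_int. Qed.

Lemma tpt_zero u : tpt d x u zzero = u.
Proof.
  apply torus_eq_int. intros i Hi.
  pose proof (tcoord_tpt_int u zzero i Hi) as H. rewrite lin_comb_zero in H.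
  int_combination (tcoord (tpt d x u zzero) i - (tcoord u i + 0)).
Qed.

Lemma tpt_tpt u n m : tpt d x (tpt d x u n) m = tpt d x u (zadd n m).
Proof.
  apply torus_eq_int. intros i Hi.
  pose proof (tcoord_tpt_int u n i Hi) as H1.
  pose proof (tcoord_tpt_int (tpt d x u n) m i Hi) as H2.
  pose proof (tcoord_tpt_int u (zadd n m) i Hi) as H3. rewrite lin_comb_add in H3.
  int_combination
    ((tcoord (tpt d x (tpt d x u n) m) i - (tcoord (tpt d x u n) i + lin_comb d x m i))
    + (tcoord (tpt d x u n) i - (tcoord u i + lin_comb d x n i))
    - (tcoord (tpt d x u (zadd n m)) i - (tcoord u i + (lin_comb d x n i + lin_comb d x m i)))).
Qed.

Lemma tpt_tadd u n : tpt d x u n = tadd u (tpt d x (tzero k) n).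
Proof.
  apply torus_eq_int. intros i Hi.
  pose proof (tcoord_tpt_int u n i Hi) as H1.
  pose proof (tcoord_tpt_int (tzero k) n i Hi) as H2. rewrite tcoord_tzero in H2.
  pose proof (tcoord_tadd_int u (tpt d x (tzero k) n) i Hi) as H3.
  int_combination ((tcoord (tpt d x u n) i - (tcoord u i + lin_comb d x n i))
    - (tcoord (tpt d x (tzero k) n) i - (0 + lin_comb d x n i))
    - (tcoord (tadd u (tpt d x (tzero k) n)) i
       - (tcoord u i + tcoord (tpt d x (tzero k) n) i))).
Qed.

Lemma tpt_zeq u n m : zeq_d d n m -> tpt d x u n = tpt d x u m.
Proof.
  intros H. unfold tpt. f_equal. apply functional_extensionality. intros i.
  f_equal. apply rsum_ext. intros j Hj. rewrite H; auto.
Qed.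

Lemma tpt_inv_eq y z w : z = tpt d x y w -> y = tpt d x z (zopp w).
Proof.
  intros ->. rewrite tpt_tpt, (tpt_zeq y _ zzero), tpt_zero; auto.
  intros j _. unfold zadd, zopp, zzero. lia.
Qed.

Hypothesis hfree : free d x.

Lemma tpt_inj u n m : tpt d x u n = tpt d x u m -> zeq_d d n m.
Proof.
  intros He.
  assert (H0 : tpt d x (tzero k) (zadd n (zopp m)) = tzero k).
  { apply torus_eq_int. intros i Hi.
    pose proof (tcoord_tpt_int u n i Hi) as H1.
    pose proof (tcoord_tpt_int u m i Hi) as H2.
    pose proof (tcoord_tpt_int (tzero k) (zadd n (zopp m)) i Hi) as H3.
    rewrite lin_comb_add, lin_comb_opp, tcoord_tzero in H3. rewrite tcoord_tzero. rewrite He in H1.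
    int_combination ((tcoord (tpt d x (tzero k) (zadd n (zopp m))) i
        - (0 + (lin_comb d x n i + - lin_comb d x m i)))
      - (tcoord (tpt d x u m) i - (tcoord u i + lin_comb d x n i))
      + (tcoord (tpt d x u m) i - (tcoord u i + lin_comb d x m i))). }
  intros j Hj. pose proof (hfree _ H0 j Hj) as Hz. unfold zadd, zopp in Hz. lia.
Qed.

Lemma tpt_cancel c n m w : tpt d x c m = tpt d x (tpt d x c n) w -> zeq_d d m (zadd n w).
Proof. rewrite tpt_tpt. apply tpt_inj. Qed.

End Orbits.

Lemma cdist_shift a b a' b' : 0 <= a < 1 -> 0 <= b < 1 -> 0 <= a' < 1 -> 0 <= b' < 1 ->
  is_int ((a - b) - (a' - b')) -> cdist a b = cdist a' b'.
Proof.
  intros Ha Hb Ha' Hb' [z Hz].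
  assert (Hz2 : (z = -1 \/ z = 0 \/ z = 1)%Z).
  { assert (-2 < IZR z < 2) as [H1 H2] by lra. apply lt_IZR in H1, H2. lia. }
  unfold cdist. destruct Hz2 as [-> | [-> | ->]]; simpl in Hz;
    unfold Rmin, Rabs; repeat destruct Rcase_abs; repeat destruct Rle_dec; lra.
Qed.

Lemma tball_tadd {k} (y z t : torus k) eps :
  tball (tadd y t) eps (tadd z t) <-> tball y eps z.
Proof.
  assert (Hc : forall i, (i < k)%nat ->
    cdist (tcoord (tadd y t) i) (tcoord (tadd z t) i) = cdist (tcoord y i) (tcoord z i)).
  { intros i Hi. apply cdist_shift; try apply tcoord_range; auto.
    pose proof (tcoord_tadd_int y t i Hi). pose proof (tcoord_tadd_int z t i Hi).
    int_combination ((tcoord (tadd y t) i - (tcoord y i + tcoord t i))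
      - (tcoord (tadd z t) i - (tcoord z i + tcoord t i))). }
  unfold tball; split; intros H i Hi; specialize (H i Hi); rewrite ?Hc in *; auto.
Qed.

Definition tneg {k} (t : torus k) : torus k := tproj k (fun i => - tcoord t i).

Lemma tadd_cancel {k} (y t t' : torus k) :
  (forall i, (i < k)%nat -> is_int (tcoord t i + tcoord t' i)) -> tadd (tadd y t) t' = y.
Proof.
  intros Htt. apply torus_eq_int. intros i Hi.
  pose proof (tcoord_tadd_int y t i Hi). pose proof (tcoord_tadd_int (tadd y t) t' i Hi).
  pose proof (Htt i Hi).
  int_combination ((tcoord (tadd (tadd y t) t') i - (tcoord (tadd y t) i + tcoord t' i))
    + (tcoord (tadd y t) i - (tcoord y i + tcoord t i)) + (tcoord t i + tcoord t' i)).
Qed.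

Lemma tcoord_tneg_int {k} (t : torus k) i : (i < k)%nat -> is_int (tcoord t i + tcoord (tneg t) i).
Proof.
  intros Hi. pose proof (tcoord_tproj_int k (fun i => - tcoord t i) i Hi).
  int_combination (tcoord (tneg t) i - - tcoord t i).
Qed.

Section Baire.

Variable k : nat.

Lemma meager_sub (S T : torus k -> Prop) : meager S -> (forall y, T y -> S y) -> meager T.
Proof. intros [Ns [H1 H2]] H. exists Ns. split; auto. Qed.

Lemma meager_countable_union (S : nat -> torus k -> Prop) :
  (forall n, meager (S n)) -> meager (fun y => exists n, S n y).
Proof.
  intros H. apply functional_choice in H. destruct H as [F HF].
  exists (fun p => F (fst (Cantor.of_nat p)) (snd (Cantor.of_nat p))). split.
  - intros p. apply HF.
  - intros y [n Hn]. destruct (proj2 (HF n) y Hn) as [m Hm].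
    exists (Cantor.to_nat (n, m)). rewrite Cantor.cancel_of_to. auto.
Qed.

Lemma meager_union (S T : torus k -> Prop) :
  meager S -> meager T -> meager (fun y => S y \/ T y).
Proof.
  intros HS HT.
  apply meager_sub with (fun y => exists n, match n with O => S y | _ => T y end).
  - apply meager_countable_union. intros [|n]; auto.
  - intros y [Hy|Hy]; [exists O | exists 1%nat]; auto.
Qed.

Lemma baire_ext (S T : torus k -> Prop) :
  (forall y, S y <-> T y) -> baire_meas S -> baire_meas T.
Proof.
  intros H [U [HU HM]]. exists U. split; auto. apply (meager_sub _ _ HM).
  intros y. rewrite <- !H. auto.
Qed.

Lemma baire_false : baire_meas (fun _ : torus k => False).
Proof.
  exists (fun _ => False). split; [intros y [] |].
  exists (fun _ _ => False). split; [| intros y [[[] _] | [[] _]]].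
  intros n U HU Hc y Uy. destruct (HU y Uy) as [eps [He _]].
  destruct (Hc y Uy eps He) as [z [[] _]].
Qed.

Lemma baire_compl (S : torus k -> Prop) : baire_meas S -> baire_meas (fun y => ~ S y).
Proof.
  intros [U [HU HM]].
  (* W is the interior of the complement of U; U and W differ from S and ~ S by
     a meager set and by the nowhere dense boundary of U *)
  set (W := fun y => exists O, topen O /\ O y /\ forall z, O z -> ~ U z).
  exists W. split.
  - intros y [O [HO [Oy HOU]]]. destruct (HO y Oy) as [eps [He Hb]].
    exists eps. split; auto. intros z Hz. exists O. auto.
  - set (D := fun y => ~ U y /\ ~ W y).
    assert (HD : nowhere_dense D).
    { intros O HO Hc y Oy.
      assert (HOU : forall w, O w -> ~ U w).
      { intros w Ow Uw. destruct (HU w Uw) as [e2 [He2 Hb2]].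
        destruct (Hc w Ow e2 He2) as [z [[Dz1 Dz2] Hz]]. apply Dz1. auto. }
      destruct (HO y Oy) as [eps [He Hb]].
      destruct (Hc y Oy eps He) as [z [[Dz1 Dz2] Hz]].
      apply Dz2. exists O. split; auto. }
    apply meager_sub with (fun y => ((S y /\ ~ U y) \/ (U y /\ ~ S y)) \/ D y).
    + apply meager_union; auto. exists (fun _ => D). split; auto. intros y Hy; exists O; auto.
    + intros y [[H1 H2] | [H1 H2]].
      * destruct (classic (U y)); [left; right; auto |].
        destruct (classic (S y)); [contradiction | right; split; auto].
      * destruct H1 as [O [HO [Oy HOU]]]. left; left. split; [apply NNPP |]; auto.
Qed.

Lemma baire_true : baire_meas (fun _ : torus k => True).
Proof. apply baire_ext with (fun y => ~ False); [tauto |]. apply baire_compl, baire_false. Qed.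

Lemma baire_countable_union (S : nat -> torus k -> Prop) :
  (forall n, baire_meas (S n)) -> baire_meas (fun y => exists n, S n y).
Proof.
  intros H. apply functional_choice in H. destruct H as [F HF].
  exists (fun y => exists n, F n y). split.
  - intros y [n Hn]. destruct (proj1 (HF n) y Hn) as [eps [He Hb]].
    exists eps. split; auto. intros z Hz. exists n; auto.
  - apply meager_sub with (fun y => exists n, (S n y /\ ~ F n y) \/ (F n y /\ ~ S n y)).
    + apply meager_countable_union. intros n. apply HF.
    + intros y [[[n Hn] H2] | [[n Hn] H2]]; exists n; [left | right];
        split; auto; intros Hf; apply H2; exists n; auto.
Qed.

Lemma baire_countable_inter (S : nat -> torus k -> Prop) :
  (forall n, baire_meas (S n)) -> baire_meas (fun y => forall n, S n y).
Proof.
  intros H. apply baire_ext with (fun y => ~ exists n, ~ S n y).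
  { intros y. split; [intros Hy n; apply NNPP; eauto | intros Hy [n Hn]; auto]. }
  apply baire_compl, baire_countable_union. intros n. apply baire_compl; auto.
Qed.

Lemma baire_union (S T : torus k -> Prop) :
  baire_meas S -> baire_meas T -> baire_meas (fun y => S y \/ T y).
Proof.
  intros HS HT. apply baire_ext with (fun y => exists n, match n with O => S y | _ => T y end).
  - intros y; split; [intros [[|n] Hn]; auto | intros [Hy|Hy]; [exists O | exists 1%nat]; auto].
  - apply baire_countable_union. intros [|n]; auto.
Qed.

Lemma baire_inter (S T : torus k -> Prop) :
  baire_meas S -> baire_meas T -> baire_meas (fun y => S y /\ T y).
Proof.
  intros HS HT. apply baire_ext with (fun y => ~ (~ S y \/ ~ T y)).
  - intros y; split; [intros H; split; apply NNPP; tauto | tauto].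
  - apply baire_compl, baire_union; apply baire_compl; auto.
Qed.

Lemma baire_const_and (P : Prop) (S : torus k -> Prop) :
  baire_meas S -> baire_meas (fun y => P /\ S y).
Proof.
  intros H. destruct (classic P).
  - apply baire_ext with S; auto. intros; tauto.
  - apply baire_ext with (fun _ => False); [intros; tauto | apply baire_false].
Qed.

Lemma baire_const_imp (P : Prop) (S : torus k -> Prop) :
  baire_meas S -> baire_meas (fun y => P -> S y).
Proof.
  intros H. destruct (classic P).
  - apply baire_ext with S; auto. intros; tauto.
  - apply baire_ext with (fun _ => True); [intros; tauto | apply baire_true].
Qed.

Lemma baire_preimage_isometry (h g : torus k -> torus k) (S : torus k -> Prop) :
  (forall y z eps, tball (h y) eps (h z) <-> tball y eps z) ->
  (forall y, h (g y) = y) -> (forall y, g (h y) = y) ->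
  baire_meas S -> baire_meas (fun y => S (h y)).
Proof.
  intros hb hg gh.
  assert (gb : forall y z eps, tball (g y) eps (g z) <-> tball y eps z).
  { intros y z eps. rewrite <- hb, !hg. reflexivity. }
  assert (Hopen : forall (f : torus k -> torus k) U,
     (forall y z eps, tball (f y) eps (f z) <-> tball y eps z) ->
     topen U -> topen (fun y => U (f y))).
  { intros f U Hf HU y Uy. destruct (HU _ Uy) as [eps [He Hb]]. exists eps. split; auto.
    intros z Hz. apply Hb, Hf; auto. }
  assert (Hnd : forall T, nowhere_dense T -> nowhere_dense (fun y => T (h y))).
  { intros T HT U HU Hc y Uy.
    refine (HT (fun z => U (g z)) (Hopen g U gb HU) _ (h y) _); [| rewrite gh; auto].
    intros z Uz eps He. destruct (Hc (g z) Uz eps He) as [w [Tw Hw]].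
    exists (h w). split; auto. rewrite <- (hg z). apply hb; auto. }
  intros [U [HU [Ns [HN HM]]]]. exists (fun y => U (h y)). split; [apply Hopen; auto |].
  exists (fun n y => Ns n (h y)). split; auto.
Qed.

Lemma baire_translate (S : torus k -> Prop) (t : torus k) :
  baire_meas S -> baire_meas (fun y => S (tadd y t)).
Proof.
  apply baire_preimage_isometry with (fun y => tadd y (tneg t)).
  - intros y z eps. apply tball_tadd.
  - intros y. apply tadd_cancel. intros i Hi.
    apply is_int_eq with (tcoord t i + tcoord (tneg t) i); [ring | apply tcoord_tneg_int; auto].
  - intros y. apply tadd_cancel, tcoord_tneg_int.
Qed.

(* Such a [Q] is a finite Boolean combination of the sets in [Ss]. *)
Lemma baire_of_finitely_determined (Ss : list (torus k -> Prop)) (Q : torus k -> Prop) :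
  (forall S, In S Ss -> baire_meas S) ->
  (forall a a', (forall S, In S Ss -> (S a <-> S a')) -> Q a -> Q a') -> baire_meas Q.
Proof.
  revert Q. induction Ss as [|S Ss IH]; intros Q HB HQ.
  - destruct (classic (exists a, Q a)) as [[a Ha] | Hn].
    + apply baire_ext with (fun _ => True); [| apply baire_true].
      intros y; split; auto. intros _. apply (HQ a); auto. intros S [].
    + apply baire_ext with (fun _ => False); [| apply baire_false].
      intros y; split; [intros [] | intros Hy; apply Hn; eauto].
  - set (Q_on b a := exists a', (S a' <-> b) /\ (forall T, In T Ss -> (T a' <-> T a)) /\ Q a').
    assert (HQb : forall b, baire_meas (Q_on b)).
    { intros b. unfold Q_on. apply IH; [intros; apply HB; simpl; auto |].
      intros a a' Ha [a0 [H1 [H2 H3]]]. exists a0. split; [exact H1 | split; [| exact H3]].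
      intros T HT. rewrite H2 by auto. auto. }
    apply baire_ext with (fun a => (S a /\ Q_on True a) \/ (~ S a /\ Q_on False a)).
    + intros a. unfold Q_on. split.
      * intros [[Sa [a0 [H1 [H2 H3]]]] | [Sa [a0 [H1 [H2 H3]]]]]; apply (HQ a0); auto;
          intros T [<- | HT]; auto; tauto.
      * intros Qa. destruct (classic (S a)); [left | right]; split; auto;
          exists a; repeat split; auto; tauto.
    + apply baire_union; apply baire_inter; auto.
      apply HB; simpl; auto. apply baire_compl, HB; simpl; auto.
Qed.

End Baire.

Lemma baire_shift {k} d x (S : torus k -> Prop) n :
  baire_meas S -> baire_meas (fun c => S (tpt d x c n)).
Proof.
  intros H. apply baire_ext with (fun c => S (tadd c (tpt d x (tzero k) n))).
  - intros c. rewrite (tpt_tadd k d x c n). tauto.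
  - apply baire_translate; auto.
Qed.

Definition in_box (d N : nat) (n : nat -> Z) : Prop :=
  forall j, (j < d)%nat -> (Z.abs (n j) <= Z.of_nat N)%Z.

Lemma in_box_mono d N N' n : in_box d N n -> (N <= N')%nat -> in_box d N' n.
Proof. intros H HN j Hj. specialize (H j Hj). lia. Qed.

Lemma in_box_add d N N' n m : in_box d N n -> in_box d N' m -> in_box d (N + N') (zadd n m).
Proof. intros H1 H2 j Hj. specialize (H1 j Hj). specialize (H2 j Hj). unfold zadd. lia. Qed.

Lemma in_box_opp d N n : in_box d N n -> in_box d N (zopp n).
Proof. intros H j Hj. specialize (H j Hj). unfold zopp. lia. Qed.

Lemma in_box_zero d N : in_box d N zzero.
Proof. intros j _. unfold zzero. lia. Qed.

Lemma in_some_box d n : exists N, in_box d N n.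
Proof.
  induction d as [|d [N HN]]; [exists O; intros j Hj; lia |].
  exists (max N (Z.to_nat (Z.abs (n d)))). intros j Hj.
  destruct (Nat.eq_dec j d) as [-> | Hjd]; [lia |]. specialize (HN j ltac:(lia)). lia.
Qed.

Definition zupd (n : nat -> Z) (j0 : nat) (z : Z) : nat -> Z :=
  fun j => if Nat.eqb j j0 then z else n j.

Definition zinterval (N : nat) : list Z :=
  map (fun i => (Z.of_nat i - Z.of_nat N)%Z) (seq 0 (2 * N + 1)).

Lemma in_zinterval N z : In z (zinterval N) <-> (Z.abs z <= Z.of_nat N)%Z.
Proof.
  unfold zinterval. rewrite in_map_iff. split.
  - intros [i [<- Hi]]. apply in_seq in Hi. lia.
  - intros H. exists (Z.to_nat (z + Z.of_nat N)). rewrite in_seq. split; lia.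
Qed.

Fixpoint box_list (d N : nat) : list (nat -> Z) :=
  match d with
  | O => zzero :: nil
  | S d' => flat_map (fun n => map (zupd n d') (zinterval N)) (box_list d' N)
  end.

Lemma box_list_in_box d N n : In n (box_list d N) -> in_box d N n.
Proof.
  revert n; induction d as [|d IH]; intros n H j Hj; [lia |].
  simpl in H. apply in_flat_map in H. destruct H as [n' [H1 H2]].
  apply in_map_iff in H2. destruct H2 as [z [<- Hz]].
  unfold zupd. destruct (Nat.eqb_spec j d); [apply in_zinterval; auto | apply IH; auto; lia].
Qed.

Lemma box_list_complete d N n : in_box d N n -> exists n', In n' (box_list d N) /\ zeq_d d n n'.
Proof.
  revert n; induction d as [|d IH]; intros n H.
  - exists zzero. split; [left; auto | intros j Hj; lia].
  - destruct (IH n) as [n' [H1 H2]]; [intros j Hj; apply H; lia |].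
    exists (zupd n' d (n d)). split.
    + apply in_flat_map. exists n'. split; auto. apply in_map_iff. exists (n d).
      split; auto. apply in_zinterval, H. lia.
    + intros j Hj. unfold zupd. destruct (Nat.eqb_spec j d); [subst; auto | apply H2; lia].
Qed.

Definition z_of_nat_enum (b : nat) : Z :=
  if Nat.even b then Z.of_nat (Nat.div2 b) else (- Z.of_nat (S (Nat.div2 b)))%Z.

Lemma z_of_nat_enum_surj z : exists b, z_of_nat_enum b = z.
Proof.
  unfold z_of_nat_enum. destruct (Z_le_gt_dec 0 z).
  - exists (2 * Z.to_nat z)%nat. rewrite Nat.even_even, Nat.div2_double. lia.
  - exists (S (2 * Z.to_nat (- z - 1))). rewrite Nat.even_succ, Nat.div2_succ_double.
    replace (Nat.odd (2 * Z.to_nat (- z - 1))) with false; [lia |].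
    symmetry. rewrite <- Nat.negb_even, Nat.even_even. auto.
Qed.

Fixpoint zvec_enum (d p : nat) : nat -> Z :=
  match d with
  | O => zzero
  | S d' => zupd (zvec_enum d' (fst (Cantor.of_nat p))) d' (z_of_nat_enum (snd (Cantor.of_nat p)))
  end.

Lemma zvec_enum_surj d n : exists p, zeq_d d (zvec_enum d p) n.
Proof.
  revert n; induction d as [|d IH]; intros n; [exists O; intros j Hj; lia |].
  destruct (IH n) as [a Ha]. destruct (z_of_nat_enum_surj (n d)) as [b Hb].
  exists (Cantor.to_nat (a, b)). cbn [zvec_enum]. rewrite Cantor.cancel_of_to. simpl.
  intros j Hj. unfold zupd. destruct (Nat.eqb_spec j d); [subst; auto | apply Ha; lia].
Qed.

Section Graph.

Variables (k d : nat) (x : nat -> torus k) (M : nat) (A B : torus k -> Prop).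

Lemma gedge_tpt a b :
  gedge d x M A B a b <-> A a /\ B b /\ exists w, in_box d M w /\ b = tpt d x a w.
Proof.
  split.
  - intros [Ha [Hb [v [[n [Hn ->]] ->]]]]. repeat split; auto.
    exists n. split; auto. symmetry. apply tpt_tadd.
  - intros [Ha [Hb [w [Hw ->]]]]. repeat split; auto.
    exists (tpt d x (tzero k) w). split; [exists w; auto | apply tpt_tadd].
Qed.

Lemma matching_sub (P N : edgeset k) :
  matching d x M A B P -> (forall a b, N a b -> P a b) -> matching d x M A B N.
Proof.
  intros [H1 [H2 H3]] H. split; [| split]; intros; [apply H1 | eapply H2 | eapply H3]; eauto.
Qed.

Lemma perfect_matching_patch (O : torus k -> Prop) (P P0 : edgeset k) :
  (forall y z, gedge d x M A B y z -> (O y <-> O z)) ->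
  matching d x M A B P ->
  (forall y, O y -> A y -> exists z, P y z) -> (forall z, O z -> B z -> exists y, P y z) ->
  perfect_matching d x M A B P0 ->
  perfect_matching d x M A B (fun y z => (O y /\ P y z) \/ (~ O y /\ P0 y z)).
Proof.
  intros Hclos [Pe [Pf Pi]] PA PB [[P0e [P0f P0i]] [P0A P0B]].
  split; [split; [| split] | split].
  - intros y z [[_ H] | [_ H]]; auto.
  - intros y z1 z2 [[H1 H2] | [H1 H2]] [[H3 H4] | [H3 H4]]; try contradiction; eauto.
  - intros y1 y2 z [[H1 H2] | [H1 H2]] [[H3 H4] | [H3 H4]]; eauto; exfalso.
    + apply H3, (Hclos _ _ (P0e _ _ H4)), (Hclos _ _ (Pe _ _ H2)); auto.
    + apply H1, (Hclos _ _ (P0e _ _ H2)), (Hclos _ _ (Pe _ _ H4)); auto.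
  - intros y Ha. destruct (classic (O y)).
    + destruct (PA y H Ha) as [z Hz]. exists z. left; auto.
    + destruct (P0A y Ha) as [z Hz]. exists z. right; auto.
  - intros z Hb. destruct (classic (O z)).
    + destruct (PB z H Hb) as [y Hy]. exists y. left. split; auto.
      apply (Hclos _ _ (Pe _ _ Hy)); auto.
    + destruct (P0B z Hb) as [y Hy]. exists y. right. split; auto.
      intros Hy'. apply H, (Hclos _ _ (P0e _ _ Hy)); auto.
Qed.

Definition box_at (c : torus k) (N : nat) (y : torus k) : Prop :=
  exists n, in_box d N n /\ y = tpt d x c n.

(* [f] witnesses, as far as the box of radius [N] around [c] can see, that the
   edge [(c + n0, c + m0)] may be added to [Mp]. *)
Definition local_ext (Mp : edgeset k) (c : torus k) (n0 m0 : nat -> Z) (N : nat) (f : edgeset k)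
  : Prop :=
  matching d x M A B f /\ f (tpt d x c n0) (tpt d x c m0) /\
  (forall y z, box_at c N y -> Mp y z -> f y z) /\
  (forall y, box_at c N y -> A y -> exists z, f y z) /\
  (forall z, box_at c N z -> B z -> exists y, f y z).

Definition locally_extendable (Mp : edgeset k) (n0 m0 : nat -> Z) (c : torus k) : Prop :=
  forall N, exists f, local_ext Mp c n0 m0 N f.

Lemma local_ext_mono Mp c n0 m0 N N' f :
  (N <= N')%nat -> local_ext Mp c n0 m0 N' f -> local_ext Mp c n0 m0 N f.
Proof.
  intros HN [H1 [H2 [H3 [H4 H5]]]].
  assert (Hb : forall y, box_at c N y -> box_at c N' y).
  { intros y [n [Hn ->]]. exists n. split; auto. eapply in_box_mono; eauto. }
  split; [exact H1 |]. split; [exact H2 |].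
  split; [| split]; intros; [apply H3 | apply H4 | apply H5]; auto.
Qed.

Lemma locally_extendable_of_perfect (Mp P : edgeset k) c n0 m0 :
  perfect_matching d x M A B P -> (forall a b, Mp a b -> P a b) ->
  P (tpt d x c n0) (tpt d x c m0) -> locally_extendable Mp n0 m0 c.
Proof.
  intros [Hm [HA HB]] Hs H0 N. exists P.
  split; [exact Hm |]. split; [exact H0 |]. split; [| split]; intros; auto.
Qed.

End Graph.

Section LocalExtension.

Variables (k d : nat) (x : nat -> torus k) (M : nat) (A B : torus k -> Prop) (Mp : edgeset k).
Hypothesis hfree : free d x.
Hypothesis hMp : forall y z, Mp y z -> gedge d x M A B y z.

Lemma local_ext_transport c c' n0 m0 N f :
  in_box d M n0 -> in_box d M m0 ->
  (forall n, in_box d (N + M) n ->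
     (A (tpt d x c n) <-> A (tpt d x c' n)) /\ (B (tpt d x c n) <-> B (tpt d x c' n))) ->
  (forall n w, in_box d N n -> in_box d M w ->
     (Mp (tpt d x c n) (tpt d x c (zadd n w)) <-> Mp (tpt d x c' n) (tpt d x c' (zadd n w)))) ->
  local_ext k d x M A B Mp c n0 m0 N f -> exists f', local_ext k d x M A B Mp c' n0 m0 N f'.
Proof.
  intros Hn0 Hm0 HAB HM [[Hfe [Hff Hfi]] [Hf0 [Hf1 [Hf2 Hf3]]]].
  assert (HNM : forall n, in_box d N n -> in_box d (N + M) n).
  { intros n Hn. eapply in_box_mono; eauto. lia. }
  (* [f] restricted to the box of radius [N + M] around [c], moved to [c'] *)
  exists (fun y' z' => exists n m, in_box d (N + M) n /\ in_box d (N + M) m /\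
      y' = tpt d x c' n /\ z' = tpt d x c' m /\ f (tpt d x c n) (tpt d x c m)).
  split; [split; [| split] | split; [| split; [| split]]].
  - intros y z [n [m [Hn [Hm [-> [-> Hnm]]]]]].
    apply Hfe, gedge_tpt in Hnm. destruct Hnm as [Ha [Hb [w [Hw Hwe]]]].
    pose proof (tpt_cancel k d x hfree _ _ _ _ Hwe) as Hz.
    rewrite (tpt_zeq k d x c' m (zadd n w)), <- tpt_tpt by auto.
    apply gedge_tpt. split; [apply HAB; auto |]. split; [| exists w; auto].
    rewrite tpt_tpt, <- (tpt_zeq k d x c' m) by auto. apply HAB; auto.
  - intros y z1 z2 [n1 [m1 [Hn1 [Hm1 [-> [-> H1]]]]]] [n2 [m2 [Hn2 [Hm2 [E [-> H2]]]]]].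
    apply (tpt_inj k d x hfree) in E. rewrite (tpt_zeq k d x c n1 n2) in H1 by auto.
    apply tpt_zeq, (tpt_inj k d x hfree c), (Hff _ _ _ H1 H2).
  - intros y1 y2 z [n1 [m1 [Hn1 [Hm1 [-> [-> H1]]]]]] [n2 [m2 [Hn2 [Hm2 [-> [E H2]]]]]].
    apply (tpt_inj k d x hfree) in E. rewrite (tpt_zeq k d x c m1 m2) in H1 by auto.
    apply tpt_zeq, (tpt_inj k d x hfree c), (Hfi _ _ _ H1 H2).
  - exists n0, m0. repeat split; auto; eapply in_box_mono; eauto; lia.
  - intros y z [n [Hn ->]] Hyz.
    pose proof (hMp _ _ Hyz) as Hg. apply gedge_tpt in Hg. destruct Hg as [_ [_ [w [Hw ->]]]].
    rewrite tpt_tpt in *. exists n, (zadd n w). repeat split; auto.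
    + apply in_box_add; auto.
    + apply Hf1; [exists n; auto |]. apply HM; auto.
  - intros y [n [Hn ->]] Ha. apply HAB in Ha; auto.
    destruct (Hf2 (tpt d x c n)) as [z Hz]; [exists n; auto | auto |].
    pose proof (Hfe _ _ Hz) as Hg. apply gedge_tpt in Hg. destruct Hg as [_ [_ [w [Hw ->]]]].
    rewrite tpt_tpt in Hz. exists (tpt d x c' (zadd n w)), n, (zadd n w).
    repeat split; auto. apply in_box_add; auto.
  - intros z [m [Hm ->]] Hb. apply HAB in Hb; auto.
    destruct (Hf3 (tpt d x c m)) as [y Hy]; [exists m; auto | auto |].
    pose proof (Hfe _ _ Hy) as Hg. apply gedge_tpt in Hg. destruct Hg as [_ [_ [w [Hw Hwe]]]].
    apply tpt_inv_eq in Hwe. rewrite tpt_tpt in Hwe. subst y.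
    exists (tpt d x c' (zadd m (zopp w))), (zadd m (zopp w)), m.
    split; [apply in_box_add, in_box_opp; auto | auto].
Qed.

Hypotheses (hA : baire_meas A) (hB : baire_meas B) (hMm : baire_matching d x M A Mp).

Lemma local_ext_baire n0 m0 N :
  in_box d M n0 -> in_box d M m0 ->
  baire_meas (fun c => exists f, local_ext k d x M A B Mp c n0 m0 N f).
Proof.
  intros Hn0 Hm0.
  set (edge_at n w c := Mp (tpt d x c n) (tpt d x c (zadd n w))).
  apply (baire_of_finitely_determined k
     (map (fun n c => A (tpt d x c n)) (box_list d (N + M)) ++
      map (fun n c => B (tpt d x c n)) (box_list d (N + M)) ++
      flat_map (fun n => map (edge_at n) (box_list d M)) (box_list d N))).
  - intros S HS. rewrite !in_app_iff, !in_map_iff, in_flat_map in HS.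
    destruct HS as [[n [<- _]] | [[n [<- _]] | [n [_ HS]]]]; [apply baire_shift; auto .. |].
    apply in_map_iff in HS. destruct HS as [w [<- Hw]]. apply box_list_in_box in Hw.
    apply baire_ext with
      (fun c => (fun y => A y /\ Mp y (tadd y (tpt d x (tzero k) w))) (tpt d x c n)).
    + intros c. unfold edge_at. rewrite <- tpt_tadd, tpt_tpt.
      split; [tauto |]. intros H. split; auto. apply (hMp _ _ H).
    + apply (baire_shift d x (fun y => A y /\ Mp y (tadd y (tpt d x (tzero k) w)))), hMm.
      exists w. auto.
  - intros c c' Hcc' [f Hf]. apply (local_ext_transport c c' n0 m0 N f); auto.
    + intros n Hn. destruct (box_list_complete _ _ _ Hn) as [n' [Hn' Hz]].
      rewrite !(tpt_zeq k d x _ n n') by auto. split.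
      * apply (Hcc' (fun c => A (tpt d x c n'))). rewrite in_app_iff, in_map_iff; eauto.
      * apply (Hcc' (fun c => B (tpt d x c n'))). rewrite !in_app_iff, !in_map_iff; eauto.
    + intros n w Hn Hw. destruct (box_list_complete _ _ _ Hn) as [n' [Hn' Hz]].
      destruct (box_list_complete _ _ _ Hw) as [w' [Hw' Hzw]].
      rewrite !(tpt_zeq k d x _ n n'), !(tpt_zeq k d x _ (zadd n w) (zadd n' w')) by
        (auto; intros j Hj; unfold zadd; rewrite Hz, Hzw; auto).
      apply (Hcc' (edge_at n' w')). rewrite !in_app_iff, in_flat_map. right; right.
      exists n'. rewrite in_map_iff. eauto.
Qed.

Lemma locally_extendable_baire n0 m0 :
  in_box d M n0 -> in_box d M m0 -> baire_meas (locally_extendable k d x M A B Mp n0 m0).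
Proof.
  intros Hn0 Hm0.
  apply (baire_countable_inter k (fun N c => exists f, local_ext k d x M A B Mp c n0 m0 N f)).
  intros N. apply local_ext_baire; auto.
Qed.

End LocalExtension.

Lemma finite_bound {T : Type} (l : list T) (P : T -> nat -> Prop) :
  (forall t N N', P t N -> (N <= N')%nat -> P t N') ->
  (forall t, In t l -> exists N, P t N) -> exists N, forall t, In t l -> P t N.
Proof.
  intros Hm. induction l as [|t l IH]; intros H; [exists O; intros t [] |].
  destruct (H t (or_introl eq_refl)) as [N1 H1].
  destruct IH as [N2 H2]; [intros; apply H; simpl; auto |].
  exists (max N1 N2). intros t' [<- | Ht']; [apply Hm with N1 | apply Hm with N2]; auto; lia.
Qed.

Section Koenig.

Variables (F Ans : Type) (o0 : Ans) (W : nat -> F -> Prop) (answers : nat -> F -> Ans -> Prop)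
  (opts : nat -> list Ans).
Hypothesis W_mono : forall N N' f, (N <= N')%nat -> W N' f -> W N f.
Hypothesis W_answers : forall p N f, W N f -> exists o, In o (opts p) /\ answers p f o.

Let consistent (cs : list Ans) : Prop :=
  forall N, exists f, W N f /\ forall p o, nth_error cs p = Some o -> answers p f o.

Lemma consistent_snoc cs : consistent cs -> exists o, consistent (cs ++ o :: nil).
Proof.
  intros Hcs. apply NNPP. intros Hn.
  set (P := length cs).
  set (refuted o N := forall f, W N f ->
      ~ (forall p o', nth_error (cs ++ o :: nil) p = Some o' -> answers p f o')).
  destruct (finite_bound (opts P) refuted) as [N HN].
  { intros o N N' H HNN' f Hf. apply H. eapply W_mono; eauto. }
  { intros o _. apply NNPP. intros Ho. apply Hn. exists o. intros N. apply NNPP. intros HN.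
    apply Ho. exists N. intros f Hf Ha. apply HN. exists f. auto. }
  destruct (Hcs N) as [f [Hf Hag]]. destruct (W_answers P N f Hf) as [o [Ho Hfo]].
  apply (HN o Ho f Hf). intros p o' Hp. destruct (Nat.lt_ge_cases p P).
  - rewrite nth_error_app1 in Hp; auto.
  - rewrite nth_error_app2 in Hp by auto. fold P in Hp.
    destruct (p - P)%nat as [|q] eqn:E; simpl in Hp.
    + injection Hp as <-. replace p with P by lia. auto.
    + destruct q; discriminate.
Qed.

Fixpoint iterate_snoc (g : list Ans -> Ans) (n : nat) : list Ans :=
  match n with O => nil | S n => iterate_snoc g n ++ g (iterate_snoc g n) :: nil end.

Lemma length_iterate_snoc g n : length (iterate_snoc g n) = n.
Proof. induction n; simpl; auto. rewrite length_app, IHn. simpl. lia. Qed.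

Lemma nth_error_iterate_snoc g n p :
  (p < n)%nat -> nth_error (iterate_snoc g n) p = Some (g (iterate_snoc g p)).
Proof.
  induction n; intros H; [lia |]. simpl. destruct (Nat.lt_ge_cases p n).
  - rewrite nth_error_app1 by (rewrite length_iterate_snoc; auto). auto.
  - replace p with n by lia. rewrite nth_error_app2 by (rewrite length_iterate_snoc; auto).
    rewrite length_iterate_snoc, Nat.sub_diag. reflexivity.
Qed.

Lemma koenig : (forall N, exists f, W N f) ->
  exists ch : nat -> Ans,
    forall K N, exists f, W N f /\ forall p, (p < K)%nat -> answers p f (ch p).
Proof.
  intros HW.
  destruct (functional_choice (fun cs o => consistent cs -> consistent (cs ++ o :: nil)))
    as [g Hg].
  { intros cs. destruct (classic (consistent cs)) as [Hc | Hc].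
    - destruct (consistent_snoc cs Hc) as [o Ho]. exists o; auto.
    - exists o0. intros H; contradiction. }
  assert (Hn : forall n, consistent (iterate_snoc g n)).
  { induction n; simpl; auto. intros N. destruct (HW N) as [f Hf].
    exists f. split; auto. intros [|p] o Hp; discriminate. }
  exists (fun p => g (iterate_snoc g p)). intros K N.
  destruct (Hn K N) as [f [Hf Ha]]. exists f. split; auto.
  intros p Hp. apply Ha, nth_error_iterate_snoc; auto.
Qed.

End Koenig.

Definition answers_at {k} (f : edgeset k) (y : torus k) (o : option (torus k)) : Prop :=
  match o with Some z => f y z | None => forall z, ~ f y z end.

Lemma local_ext_answers {k} d (x : nat -> torus k) M (A B : torus k -> Prop) Mp c n0 m0 N f y :
  local_ext k d x M A B Mp c n0 m0 N f ->
  exists o, In o (None :: map (fun w => Some (tpt d x y w)) (box_list d M)) /\ answers_at f y o.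
Proof.
  intros [[Hfe _] _]. destruct (classic (exists z, f y z)) as [[z Hz] | Hnz].
  - pose proof (Hfe _ _ Hz) as Hg. apply gedge_tpt in Hg. destruct Hg as [_ [_ [w [Hw ->]]]].
    destruct (box_list_complete _ _ _ Hw) as [w' [Hw' Hzw]].
    exists (Some (tpt d x y w')). split; [right; apply in_map_iff; eauto |].
    simpl. rewrite <- (tpt_zeq k d x y w w'); auto.
  - exists None. split; [left; auto |]. intros z Hz. eauto.
Qed.

Section OrbitLimit.

Variables (k d : nat) (x : nat -> torus k) (M : nat) (A B : torus k -> Prop) (Mp : edgeset k).
Variables (c : torus k) (n0 m0 : nat -> Z) (ch : nat -> option (torus k)).

Let vertex (p : nat) : torus k := tpt d x c (zvec_enum d p).

Hypothesis hch : forall K N, exists f, local_ext k d x M A B Mp c n0 m0 N f /\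
  forall p, (p < K)%nat -> answers_at f (vertex p) (ch p).

Definition orbit (y : torus k) : Prop := exists n, y = tpt d x c n.

Definition limit_matching (y z : torus k) : Prop := exists p, y = vertex p /\ ch p = Some z.

Lemma orbit_gedge y z : gedge d x M A B y z -> (orbit y <-> orbit z).
Proof.
  intros He. apply gedge_tpt in He. destruct He as [_ [_ [w [_ ->]]]]. split.
  - intros [n ->]. exists (zadd n w). apply tpt_tpt.
  - intros [m Hm]. symmetry in Hm. apply tpt_inv_eq in Hm. rewrite tpt_tpt in Hm. eexists; eauto.
Qed.

Lemma vertex_surj n : exists p, vertex p = tpt d x c n.
Proof. destruct (zvec_enum_surj d n) as [p Hp]. exists p. apply tpt_zeq; auto. Qed.

Lemma limit_matching_matching : matching d x M A B limit_matching.
Proof.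
  split; [| split].
  - intros y z [p [-> Hp]]. destruct (hch (S p) O) as [f [[[Hfe _] _] Ha]].
    specialize (Ha p ltac:(lia)). rewrite Hp in Ha. auto.
  - intros y z1 z2 [p1 [-> H1]] [p2 [E H2]].
    destruct (hch (S (max p1 p2)) O) as [f [[[_ [Hff _]] _] Ha]].
    pose proof (Ha p1 ltac:(lia)) as A1. pose proof (Ha p2 ltac:(lia)) as A2.
    rewrite H1 in A1. rewrite H2, <- E in A2. eauto.
  - intros y1 y2 z [p1 [-> H1]] [p2 [-> H2]].
    destruct (hch (S (max p1 p2)) O) as [f [[[_ [_ Hfi]] _] Ha]].
    pose proof (Ha p1 ltac:(lia)) as A1. pose proof (Ha p2 ltac:(lia)) as A2.
    rewrite H1 in A1. rewrite H2 in A2. eauto.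
Qed.

Lemma limit_matching_forced y z : orbit y ->
  (forall N f, local_ext k d x M A B Mp c n0 m0 N f -> box_at k d x c N y -> f y z) ->
  limit_matching y z.
Proof.
  intros [n ->] H. destruct (vertex_surj n) as [p Hp]. destruct (in_some_box d n) as [N HN].
  destruct (hch (S p) N) as [f [Hw Ha]]. specialize (Ha p ltac:(lia)).
  assert (Hfz : f (tpt d x c n) z) by (apply H with N; [| exists n]; auto).
  destruct Hw as [[_ [Hff _]] _]. rewrite Hp in Ha. exists p. split; auto.
  destruct (ch p) as [z' |]; simpl in Ha; [f_equal; eauto | exfalso; eapply Ha; eauto].
Qed.

Lemma limit_matching_covers_A y : orbit y -> A y -> exists z, limit_matching y z.
Proof.
  intros [n ->] Ha. destruct (vertex_surj n) as [p Hp]. destruct (in_some_box d n) as [N HN].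
  destruct (hch (S p) N) as [f [[_ [_ [_ [HA _]]]] Hag]]. specialize (Hag p ltac:(lia)).
  destruct (HA (tpt d x c n)) as [z Hz]; [exists n; auto | auto |].
  rewrite Hp in Hag. destruct (ch p) as [z' |] eqn:E.
  - exists z', p. auto.
  - exfalso. eapply Hag; eauto.
Qed.

Lemma limit_matching_covers_B z : orbit z -> B z -> exists y, limit_matching y z.
Proof.
  intros [m ->] Hb.
  (* the possible partners of [c + m] are [c + m - w] with [w] in the box of radius [M] *)
  destruct (finite_bound (box_list d M)
      (fun w K => exists p, (p < K)%nat /\ vertex p = tpt d x (tpt d x c m) (zopp w)))
    as [K HK].
  { intros w K K' [p [Hp Hq]] HKK'. exists p. split; auto. lia. }
  { intros w _. rewrite tpt_tpt. destruct (vertex_surj (zadd m (zopp w))) as [p Hp].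
    exists (S p), p. auto. }
  destruct (in_some_box d m) as [N HN].
  destruct (hch K N) as [f [[[Hfe [Hff Hfi]] [_ [_ [_ HB']]]] Ha]].
  destruct (HB' (tpt d x c m)) as [y Hy]; [exists m; auto | auto |].
  pose proof (Hfe _ _ Hy) as Hg. apply gedge_tpt in Hg. destruct Hg as [_ [_ [w [Hw Hwe]]]].
  destruct (box_list_complete _ _ _ Hw) as [w' [Hw' Hzw]].
  apply tpt_inv_eq in Hwe. rewrite (tpt_zeq k d x _ (zopp w) (zopp w')) in Hwe
    by (intros j Hj; unfold zopp; rewrite Hzw; auto).
  destruct (HK w' Hw') as [p [Hp Hyp]]. rewrite <- Hyp in Hwe. subst y.
  specialize (Ha p Hp). destruct (ch p) as [z' |] eqn:E; simpl in Ha.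
  - exists (vertex p), p. split; auto. rewrite E. f_equal. eauto.
  - exfalso. eapply Ha; eauto.
Qed.

End OrbitLimit.

Lemma extendable_of_locally_extendable {k} d (x : nat -> torus k) M (A B : torus k -> Prop)
  (Mp : edgeset k) c n0 m0 :
  extendable d x M A B Mp -> locally_extendable k d x M A B Mp n0 m0 c ->
  extendable d x M A B (fun a b => Mp a b \/ (a = tpt d x c n0 /\ b = tpt d x c m0)).
Proof.
  intros [_ [P0 [HP0 HP0s]]] Hloc.
  destruct (koenig (edgeset k) (option (torus k)) None (local_ext k d x M A B Mp c n0 m0)
      (fun p f => answers_at f (tpt d x c (zvec_enum d p)))
      (fun p => None :: map (fun w => Some (tpt d x (tpt d x c (zvec_enum d p)) w)) (box_list d M)))
    as [ch Hch].
  - intros N N' f HN Hf. eapply local_ext_mono; eauto.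
  - intros p N f. apply local_ext_answers.
  - exact Hloc.
  - set (P := limit_matching k d x c ch).
    pose proof (limit_matching_forced k d x M A B Mp c n0 m0 ch Hch) as Hforce.
    set (Ps := fun y z => (orbit k d x c y /\ P y z) \/ (~ orbit k d x c y /\ P0 y z)).
    assert (HPs : perfect_matching d x M A B Ps).
    { apply perfect_matching_patch; [| apply (limit_matching_matching k d x M A B Mp c n0 m0 ch Hch)
        | ..]; auto.
      - apply orbit_gedge.
      - apply (limit_matching_covers_A k d x M A B Mp c n0 m0); auto.
      - apply (limit_matching_covers_B k d x M A B Mp c n0 m0); auto. }
    assert (Hsub : forall a b, Mp a b \/ (a = tpt d x c n0 /\ b = tpt d x c m0) -> Ps a b).
    { intros a b [Hab | [-> ->]].
      - destruct (classic (orbit k d x c a)); [left | right]; split; auto.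
        apply Hforce; auto. intros N f [_ [_ [H3 _]]] Hbx. auto.
      - left. split; [exists n0; auto |]. apply Hforce; [exists n0; auto |].
        intros N f [_ [H2 _]] _. auto. }
    split; [eapply matching_sub; [apply HPs | exact Hsub] |].
    exists Ps. split; auto.
Qed.

Section ExtendCovering.

Variables (k d : nat) (x : nat -> torus k) (M : nat) (A B Ai : torus k -> Prop) (ri : nat)
  (Mprev : edgeset k).
Hypotheses (hfree : free d x) (hA : baire_meas A) (hB : baire_meas B) (hAi : baire_meas Ai)
  (hAiA : forall a, Ai a -> A a)
  (hsparse : sparse d x (Z.of_nat ri + 4 * Z.of_nat M)%Z Ai)
  (hMm : baire_matching d x M A Mprev) (hext : extendable d x M A B Mprev).

Let nshifts := length (box_list d M).

Definition shift (i : nat) : nat -> Z := nth i (box_list d M) zzero.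

Let shift_ok (i : nat) (a : torus k) : Prop :=
  locally_extendable k d x M A B Mprev zzero (shift i) a.

(* Taking the least admissible index makes the new partner of [a] a
   measurable function of [a]. *)
Definition first_shift (a : torus k) (i : nat) : Prop :=
  (i < nshifts)%nat /\ shift_ok i a /\ forall j, (j < i)%nat -> ~ shift_ok j a.

Definition unmatched (a : torus k) : Prop := Ai a /\ forall b, ~ Mprev a b.

Definition new_edge (a b : torus k) : Prop :=
  unmatched a /\ exists i, first_shift a i /\ b = tpt d x a (shift i).

Definition extension (a b : torus k) : Prop := Mprev a b \/ new_edge a b.

Lemma shift_in_box i : in_box d M (shift i).
Proof.
  unfold shift. destruct (Nat.lt_ge_cases i nshifts).
  - apply box_list_in_box, nth_In; auto.
  - rewrite nth_overflow; auto. apply in_box_zero.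
Qed.

Lemma shift_complete w : in_box d M w -> exists i, (i < nshifts)%nat /\ zeq_d d w (shift i).
Proof.
  intros Hw. destruct (box_list_complete _ _ _ Hw) as [w' [Hw' Hz]].
  destruct (In_nth _ _ zzero Hw') as [i [Hi Hie]]. exists i. split; auto.
  unfold shift. rewrite Hie; auto.
Qed.

Lemma first_shift_unique a i i' : first_shift a i -> first_shift a i' -> i = i'.
Proof.
  intros [_ [H1 H2]] [_ [H1' H2']].
  destruct (Nat.lt_total i i') as [H | [H | H]]; auto; exfalso; [eapply H2' | eapply H2]; eauto.
Qed.

Lemma first_shift_exists a : unmatched a -> exists i, first_shift a i.
Proof.
  intros [Ha _]. destruct hext as [_ [P0 [HP0 HP0s]]].
  pose proof HP0 as [[HP0e _] [HP0A _]]. destruct (HP0A a (hAiA a Ha)) as [b Hb].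
  pose proof (HP0e _ _ Hb) as Hg. apply gedge_tpt in Hg. destruct Hg as [_ [_ [w [Hw ->]]]].
  destruct (shift_complete w Hw) as [i [Hi Hz]].
  destruct (dec_inh_nat_subset_has_unique_least_element
      (fun i => (i < nshifts)%nat /\ shift_ok i a) (fun i => classic _)) as [i0 [[[Hi0 Hc0] Hl] _]].
  { exists i. split; auto. apply (locally_extendable_of_perfect k d x M A B Mprev P0); auto.
    rewrite (tpt_zero k d x a), <- (tpt_zeq k d x a w); auto. }
  exists i0. repeat split; auto. intros j Hj Hcj.
  assert (i0 <= j)%nat by (apply Hl; split; auto; lia). lia.
Qed.

Lemma first_shift_extendable a i : first_shift a i ->
  extendable d x M A B (fun a' b' => Mprev a' b' \/ (a' = a /\ b' = tpt d x a (shift i))).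
Proof.
  intros [_ [Hc _]]. pose proof (extendable_of_locally_extendable d x M A B Mprev a zzero (shift i)
    hext Hc) as H. rewrite tpt_zero in H. exact H.
Qed.

Lemma new_edge_extendable a b : new_edge a b ->
  extendable d x M A B (fun a' b' => Mprev a' b' \/ (a' = a /\ b' = b)).
Proof. intros [_ [i [Hi ->]]]. apply first_shift_extendable; auto. Qed.

Lemma new_edge_gedge a b : new_edge a b -> gedge d x M A B a b.
Proof. intros H. destruct (new_edge_extendable a b H) as [[He _] _]. apply He. right; auto. Qed.

Lemma new_edge_injective a a' b : new_edge a b -> new_edge a' b -> a = a'.
Proof.
  intros [[Ha _] [i [_ ->]]] [[Ha' _] [i' [_ Hb]]].
  apply tpt_inv_eq in Hb. rewrite tpt_tpt in Hb. rewrite Hb.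
  destruct (classic (zeq_d d zzero (zadd (shift i) (zopp (shift i'))))) as [Hz | Hz].
  - rewrite <- (tpt_zeq k d x a _ _ Hz). symmetry; apply tpt_zero.
  - rewrite <- (tpt_zero k d x a) in Ha. rewrite Hb in Ha'.
    destruct (hsparse a _ _ Ha Ha' Hz) as [j [Hj Hfar]].
    pose proof (shift_in_box i j Hj). pose proof (shift_in_box i' j Hj).
    unfold zzero, zadd, zopp in Hfar. lia.
Qed.

Lemma extension_matching : matching d x M A B extension.
Proof.
  destruct hext as [[HMe [HMf HMi]] _].
  split; [| split].
  - intros a b [H | H]; [auto | apply new_edge_gedge; auto].
  - intros a b b' [H | [[_ Hn] [i [Hi ->]]]] [H' | [[_ Hn'] [i' [Hi' ->]]]].
    + eauto.
    + exfalso. eapply Hn'; eauto.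
    + exfalso. eapply Hn; eauto.
    + rewrite (first_shift_unique a i i'); auto.
  - intros a a' b [H | H] [H' | H'].
    + eauto.
    + exfalso. destruct (new_edge_extendable a' b H') as [[_ [_ Hi]] _].
      destruct H' as [[_ Hn] _]. apply (Hn b). rewrite <- (Hi a a' b); auto.
    + exfalso. destruct (new_edge_extendable a b H) as [[_ [_ Hi]] _].
      destruct H as [[_ Hn] _]. apply (Hn b). rewrite (Hi a a' b); auto.
    + apply (new_edge_injective a a' b); auto.
Qed.

Lemma unmatched_baire : baire_meas unmatched.
Proof.
  destruct hext as [[HMe _] _].
  apply baire_inter; auto.
  apply baire_ext with (fun a => ~ exists i, (i < nshifts)%nat /\ Mprev a (tpt d x a (shift i))).
  { intros a. split.
    - intros Hn b Hb. apply Hn. pose proof (HMe _ _ Hb) as Hg. apply gedge_tpt in Hg.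
      destruct Hg as [_ [_ [w [Hw ->]]]]. destruct (shift_complete w Hw) as [i [Hi Hz]].
      exists i. split; auto. rewrite <- (tpt_zeq k d x a w); auto.
    - intros Hn [i [_ Hi]]. eapply Hn; eauto. }
  apply baire_compl,
    (baire_countable_union k (fun i a => (i < nshifts)%nat /\ Mprev a (tpt d x a (shift i)))).
  intros i. apply baire_const_and.
  apply baire_ext with (fun a => A a /\ Mprev a (tadd a (tpt d x (tzero k) (shift i)))).
  - intros a. rewrite <- tpt_tadd. split; [tauto |]. intros H; split; auto. apply (HMe _ _ H).
  - apply hMm. exists (shift i). split; auto. apply shift_in_box.
Qed.

Lemma shift_ok_baire i : baire_meas (shift_ok i).
Proof.
  apply locally_extendable_baire; auto; [apply hext | apply in_box_zero | apply shift_in_box].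
Qed.

Lemma first_shift_baire i : baire_meas (fun a => first_shift a i).
Proof.
  apply baire_const_and, baire_inter; [apply shift_ok_baire |].
  apply (baire_countable_inter k (fun j a => (j < i)%nat -> ~ shift_ok j a)). intros j.
  apply baire_const_imp, baire_compl, shift_ok_baire.
Qed.

Lemma extension_baire : baire_matching d x M A extension.
Proof.
  intros v [nv [Hnv ->]].
  apply baire_ext with (fun a => (A a /\ Mprev a (tadd a (tpt d x (tzero k) nv))) \/
      (A a /\ unmatched a /\ exists i, zeq_d d nv (shift i) /\ first_shift a i)).
  - intros a. unfold extension, new_edge. rewrite <- tpt_tadd. split.
    + intros [[Ha H] | [Ha [Hu [i [Hz Hi]]]]]; split; auto.
      right. split; auto. exists i. split; auto. apply tpt_zeq; auto.
    + intros [Ha [H | [Hu [i [Hi He]]]]]; [left; auto | right].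
      split; [auto | split; [auto |]]. exists i. split; auto. apply (tpt_inj k d x hfree a); auto.
  - apply baire_union; [apply hMm; exists nv; auto |].
    apply baire_inter; auto. apply baire_inter; [apply unmatched_baire |].
    apply (baire_countable_union k (fun i a => zeq_d d nv (shift i) /\ first_shift a i)).
    intros i. apply baire_const_and, first_shift_baire.
Qed.

Lemma new_edges_far u n m n' m' :
  new_edge (tpt d x u n) (tpt d x u m) -> new_edge (tpt d x u n') (tpt d x u m') ->
  ~ (zeq_d d n n' /\ zeq_d d m m') ->
  let R := (Z.of_nat ri + 2 * Z.of_nat M)%Z in
  zfar d R n n' /\ zfar d R n m' /\ zfar d R m n' /\ zfar d R m m'.
Proof.
  intros [[Ha _] [i [Hi Hm]]] [[Ha' _] [i' [Hi' Hm']]] Hnz.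
  apply (tpt_cancel k d x hfree) in Hm, Hm'.
  assert (Hnn : ~ zeq_d d n n').
  { intros Hz. apply Hnz. split; auto. rewrite (tpt_zeq k d x u n n') in Hi by auto.
    rewrite (first_shift_unique _ _ _ Hi Hi') in Hm.
    intros j Hj. rewrite Hm, Hm' by auto. unfold zadd. rewrite Hz; auto. }
  destruct (hsparse u n n' Ha Ha' Hnn) as [j [Hj Hfar]].
  pose proof (shift_in_box i j Hj). pose proof (shift_in_box i' j Hj).
  specialize (Hm j Hj). specialize (Hm' j Hj). unfold zadd in Hm, Hm'.
  cbv zeta. unfold zfar. repeat split; exists j; (split; [exact Hj | lia]).
Qed.

Lemma extend_matching_covering :
  exists Mi : edgeset k,
    matching d x M A B Mi /\
    baire_matching d x M A Mi /\
    (forall a b, Mprev a b -> Mi a b) /\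
    (forall a, Ai a -> exists b, B b /\ Mi a b) /\
    (forall (u : torus k) (n m n' m' : nat -> Z),
        Mi (tpt d x u n) (tpt d x u m) -> ~ Mprev (tpt d x u n) (tpt d x u m) ->
        Mi (tpt d x u n') (tpt d x u m') -> ~ Mprev (tpt d x u n') (tpt d x u m') ->
        ~ (zeq_d d n n' /\ zeq_d d m m') ->
        let R := (Z.of_nat ri + 2 * Z.of_nat M)%Z in
        zfar d R n n' /\ zfar d R n m' /\ zfar d R m n' /\ zfar d R m m') /\
    (forall a b, Mi a b -> ~ Mprev a b ->
        extendable d x M A B (fun a' b' => Mprev a' b' \/ (a' = a /\ b' = b))).
Proof.
  exists extension. split; [apply extension_matching |]. split; [apply extension_baire |].
  split; [intros a b H; left; auto |]. split; [| split].
  - intros a Ha. destruct (classic (exists b, Mprev a b)) as [[b Hb] | Hn].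
    + exists b. split; [apply (proj1 (proj1 hext) _ _ Hb) | left; auto].
    + assert (Hu : unmatched a) by (split; auto; intros b Hb; apply Hn; eauto).
      destruct (first_shift_exists a Hu) as [i Hi]. exists (tpt d x a (shift i)).
      assert (He : new_edge a (tpt d x a (shift i))) by (split; eauto).
      split; [apply (new_edge_gedge _ _ He) | right; auto].
  - intros u n m n' m' [H1 | H1] H2 [H3 | H3] H4; try contradiction.
    apply (new_edges_far u n m n' m'); auto.
  - intros a b [H | H] Hn; [contradiction | apply new_edge_extendable; auto].
Qed.

End ExtendCovering.

Section Swap.

Variables (k d : nat) (x : nat -> torus k) (M : nat) (A B : torus k -> Prop).

Lemma gedge_swap y z : gedge d x M A B y z -> gedge d x M B A z y.
Proof.
  intros H. apply gedge_tpt in H. destruct H as [Ha [Hb [w [Hw Hz]]]].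
  apply tpt_inv_eq in Hz. apply gedge_tpt. repeat split; auto.
  exists (zopp w). split; auto. apply in_box_opp; auto.
Qed.

Lemma matching_swap (N : edgeset k) :
  matching d x M A B N -> matching d x M B A (fun b a => N a b).
Proof.
  intros [H1 [H2 H3]]. split; [| split]; intros; [apply gedge_swap | eapply H3 | eapply H2]; eauto.
Qed.

Lemma extendable_swap (N : edgeset k) :
  extendable d x M A B N -> extendable d x M B A (fun b a => N a b).
Proof.
  intros [Hm [P [[HPm [HPA HPB]] HPs]]]. split; [apply matching_swap; auto |].
  exists (fun b a => P a b). split; auto. split; auto. apply matching_swap; auto.
Qed.

Lemma extendable_iff (N N' : edgeset k) :
  (forall a b, N a b <-> N' a b) -> extendable d x M A B N -> extendable d x M A B N'.
Proof.
  intros H [Hm [P [HP HPs]]]. split.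
  - apply matching_sub with N; auto. intros a b Hab; apply H; auto.
  - exists P. split; auto. intros a b Hab; apply HPs, H; auto.
Qed.

Lemma baire_matching_swap (N : edgeset k) :
  matching d x M A B N -> baire_matching d x M A N -> baire_matching d x M B (fun b a => N a b).
Proof.
  intros [He _] HN v [nv [Hnv ->]].
  apply baire_ext with (fun b => (fun a => A a /\ N a (tadd a (tpt d x (tzero k) (zopp nv))))
    (tpt d x b nv)).
  - intros b. rewrite <- (tpt_tadd k d x b nv), <- tpt_tadd, <- (tpt_inv_eq k d x b _ nv); auto.
    split; intros [H1 H2]; split; auto; apply (He _ _ H2).
  - apply (baire_shift d x (fun a => A a /\ N a (tadd a (tpt d x (tzero k) (zopp nv))))).
    apply HN. exists (zopp nv). split; auto. apply in_box_opp; auto.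
Qed.

End Swap.

Lemma sparse_sub {k} d (x : nat -> torus k) r (X Y : torus k -> Prop) :
  sparse d x r X -> (forall y, Y y -> X y) -> sparse d x r Y.
Proof. intros H HYX u n m H1 H2 Hnm. apply (H u); auto. Qed.

Theorem lemma5p1 (k d : nat) (hk : (1 <= k)%nat) (hd : (1 <= d)%nat)
  (x : nat -> torus k) (hfree : free d x)
  (M : nat) (hM : (1 <= M)%nat)
  (A B : torus k -> Prop) (hA : baire_meas A) (hB : baire_meas B)
  (i : nat) (hi : (1 <= i)%nat) (ri : nat)
  (Ai Bi : torus k -> Prop)
  (hAiA : forall a, Ai a -> A a) (hBiB : forall b, Bi b -> B b)
  (hAi : baire_meas Ai) (hBi : baire_meas Bi)
  (hempty : (forall a, ~ Ai a) \/ (forall b, ~ Bi b))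
  (hsparse : sparse d x (Z.of_nat ri + 4 * Z.of_nat M)%Z (fun y => Ai y \/ Bi y))
  (Mprev : edgeset k)
  (hMprev_meas : baire_matching d x M A Mprev)
  (hMprev_ext : extendable d x M A B Mprev) :
  exists Mi : edgeset k,
    matching d x M A B Mi /\
    baire_matching d x M A Mi /\
    (forall a b, Mprev a b -> Mi a b) /\
    (forall a, Ai a -> exists b, B b /\ Mi a b) /\
    (forall b, Bi b -> exists a, A a /\ Mi a b) /\
    (forall (u : torus k) (n m n' m' : nat -> Z),
        Mi (tpt d x u n) (tpt d x u m) -> ~ Mprev (tpt d x u n) (tpt d x u m) ->
        Mi (tpt d x u n') (tpt d x u m') -> ~ Mprev (tpt d x u n') (tpt d x u m') ->
        ~ (zeq_d d n n' /\ zeq_d d m m') ->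
        let R := (Z.of_nat ri + 2 * Z.of_nat M)%Z in
        zfar d R n n' /\ zfar d R n m' /\ zfar d R m n' /\ zfar d R m m') /\
    (forall a b, Mi a b -> ~ Mprev a b ->
        extendable d x M A B (fun a' b' => Mprev a' b' \/ (a' = a /\ b' = b))).
Proof.
  destruct hempty as [HAi0 | HBi0].
  - (* match the points of Bi in the transposed graph *)
    destruct (extend_matching_covering k d x M B A Bi ri (fun b a => Mprev a b) hfree hB hA hBi hBiB
        (sparse_sub d x _ _ _ hsparse (fun y Hy => or_intror Hy))
        (baire_matching_swap k d x M A B Mprev (proj1 hMprev_ext) hMprev_meas)
        (extendable_swap k d x M A B Mprev hMprev_ext))
      as [Mi [Hm [Hbm [Hsub [Hcov [Hfar Hext]]]]]].
    exists (fun a b => Mi b a). split; [apply (matching_swap k d x M B A); auto |].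
    split; [apply (baire_matching_swap k d x M B A); auto |]. split; [auto |].
    split; [intros a Ha; destruct (HAi0 a Ha) |]. split; [auto |]. split.
    + intros u n m n' m' H1 H2 H3 H4 H5.
      pose proof (Hfar u m n m' n' H1 H2 H3 H4 ltac:(tauto)). cbv zeta in *. tauto.
    + intros a b Hab Hn. apply extendable_iff with (fun a' b' => Mprev a' b' \/ (b' = b /\ a' = a)).
      { intros a' b'. tauto. }
      apply (extendable_swap k d x M B A), (Hext b a Hab Hn).
  - destruct (extend_matching_covering k d x M A B Ai ri Mprev hfree hA hB hAi hAiA
        (sparse_sub d x _ _ _ hsparse (fun y Hy => or_introl Hy)) hMprev_meas hMprev_ext)
      as [Mi [Hm [Hbm [Hsub [Hcov [Hfar Hext]]]]]].
    exists Mi. repeat (split; [assumption |]).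
    split; [intros b Hb; destruct (HBi0 b Hb) | auto].
Qed.
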